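(* (Stability 2.) Let $1\le m\le n$, $x^{(m)}=(x_1,\dots,x_{m-1})$, $y^{(n)}=(y_1,\dots,y_{n-1})$. Then (for either type) \[{_{r+1}\Phi_r}\left[\begin{matrix}a_1,\dots,a_{r+1}\\ b_1,\dots,b_r\end{matrix};q,t;(x^{(m)},0),(y^{(n)},0)\right]={_{r+2}\Phi_{r+1}}\left[\begin{matrix}t^{n-1},a_1,\dots,a_{r+1}\\ t^n,b_1,\dots,b_r\end{matrix};q,t;x^{(m)},ty^{(n)}\right],\] where the left series has parameters $(m,n)$ and the right series has parameters $(m-1,n-1)$.
   Context: Notation. $(b;q)_N=(1-b)\cdots(1-bq^{N-1})$, $(b;q)_{-N}=1/(bq^{-N};q)_N$, $(b;q)_\infty=\prod_{k\ge0}(1-bq^k)$. For a partition $\lambda$: $l(\lambda)$, $|\lambda|$, $n(\lambda)=\sum_i(i-1)\lambda_i$, $c'_\lambda(q,t)=\prod_{s\in\lambda}(1-q^{a(s)+1}t^{l(s)})$ ($a(s)=\lambda_i-j$, $l(s)=\lambda'_j-i$), $(b;q,t)_\lambda=\prod_{i\ge1}(bt^{1-i};q)_{\lambda_i}$. $P_\lambda(x;q,t)$ Macdonald polynomial. For $0\le m\le n$: $F(u;x,y;t)=\sum_{I\subseteq\{1,\dots,m\}}(-u)^{|I|}t^{\binom{|I|}{2}}\prod_{i\in I,\,j\notin I}\frac{tx_i-x_j}{x_i-x_j}\prod_{i\in I}\prod_{j=1}^n\frac{1-x_iy_j}{1-tx_iy_j}$; $V_{\lambda\mu}(u,z;q,t)$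 is $F(u;x^{-1},y;t)$ at $x_i=zq^{\lambda_i}t^{m-i}$, $y_j=q^{\mu_j}t^{n-j}$; Type I: $V_{\lambda\mu}(q,t)=V_{\lambda\mu}(1,1;q,t)$; Type II: $V_{\lambda\mu}(q,t)=q^{-|\lambda|}V_{\lambda\mu}(t^{n-m+1},1;q,t)$; $\Omega_{\lambda\mu}(q,t)=V_{\lambda\mu}(q,t)(qt^{m-1};q,t)_\lambda\prod_{i=1}^m\prod_{j=1}^n\frac{(qt^{j-i+m-n-1};q)_{\lambda_i-\mu_j}}{(qt^{j-i+m-n};q)_{\lambda_i-\mu_j}}$. The $\mathfrak{sl}_3$ series with parameters $(m,n)$: ${_{r+1}\Phi_r}[a;b;q,t;x,y]=\prod_{i=1}^m\frac{(x_i;q)_\infty}{(x_it^{m-n-1};q)_\infty}\sum_{\lambda,\mu}t^{n(\lambda)+n(\mu)}\frac{P_\lambda(x;q,t)P_\mu(y;q,t)}{c'_\lambda(q,t)c'_\mu(q,t)}\frac{(a_1,\dots,a_{r+1};q,t)_\mu}{(b_1,\dots,b_r;q,t)_\mu}\Omega_{\lambda\mu}(q,t)$, over $l(\lambda)\le m$, $l(\mu)\le n$, $\lambda_i\ge\mu_{i-m+n}$. Convergence assumed. *)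

From HB Require Import structures.
From mathcomp Require Import all_boot all_order all_algebra.
From mathcomp Require Import boolp classical_sets topology normedtype sequences.
Set Implicit Arguments. Unset Strict Implicit. Unset Printing Implicit Defensive.
Import Order.TTheory GRing.Theory Num.Theory numFieldNormedType.Exports.
Local Open Scope classical_set_scope.
Local Open Scope ring_scope.

Definition qpoch {K : numFieldType} (b q : K) (N : nat) : K :=
  \prod_(k < N) (1 - b * q ^+ k).
Definition qpochZ {K : numFieldType} (b q : K) (N : int) : K :=
  match N with
  | Posz k => qpoch b q k
  | Negz k => (qpoch (b * q ^- k.+1) q k.+1)^-1
  end.
Definition qpoch_inf {K : numFieldType} (b q : K) : K :=
  lim (qpoch b q @ \oo).

(* ---------- partitions ----------
   A partition is a seq nat (nonincreasing; trailing zeros allowed and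
   harmless).  Rows/columns are 0-indexed below: part s i = lambda_{i+1}. *)
Definition part (s : seq nat) (i : nat) : nat := nth 0%N s i.
Definition pconj (s : seq nat) (j : nat) : nat := count (fun x => (j < x)%N) s.
(* arm and leg of the box s=(i+1,j+1) *)
Definition arm (s : seq nat) (i j : nat) : nat := (part s i - j.+1)%N.
Definition leg (s : seq nat) (i j : nat) : nat := (pconj s j - i.+1)%N.
Definition nfun (s : seq nat) : nat := (\sum_(i < size s) i * part s i)%N.
Definition cprime {K : numFieldType} (q t : K) (s : seq nat) : K :=
  \prod_(i < size s) \prod_(j < part s i)
     (1 - q ^+ (arm s i j).+1 * t ^+ leg s i j).
Definition qtpoch {K : numFieldType} (b q t : K) (s : seq nat) : K :=
  \prod_(i < size s) qpoch (b * t ^- i) q (part s i).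

Definition fseq (k N : nat) (f : {ffun 'I_k -> 'I_N}) : seq nat :=
  [seq nat_of_ord (f i) | i <- enum 'I_k].

(* ---------- Macdonald polynomials P_lambda(x;q,t) ----------
   Defined by Macdonald's explicit formula (Symmetric Functions and Hall
   Polynomials, VI (7.13')): P_lambda = sum_T psi_T(q,t) x^T over
   semistandard tableaux T of shape lambda, with
   psi_T = prod_i psi_{lambda^(i)/lambda^(i-1)},
   psi_{lambda/mu} = prod_{s in R_{lambda/mu} - C_{lambda/mu}} b_mu(s)/b_lambda(s),
   b_lambda(s) = (1 - q^{a(s)} t^{l(s)+1}) / (1 - q^{a(s)+1} t^{l(s)}). *)
Definition bfun {K : numFieldType} (q t : K) (s : seq nat) (i j : nat) : K :=
  (1 - q ^+ arm s i j * t ^+ (leg s i j).+1) /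
  (1 - q ^+ (arm s i j).+1 * t ^+ leg s i j).
(* boxes (i,j) of lambda in a row meeting lambda/mu but in a column not
   meeting lambda/mu *)
Definition psi {K : numFieldType} (q t : K) (lam mu : seq nat) : K :=
  \prod_(i < size lam)
    \prod_(j < part lam i | (part mu i < part lam i)%N && (pconj lam j == pconj mu j))
      (bfun q t mu i j / bfun q t lam i j).
Definition hstrip (lam mu : seq nat) : bool :=
  all (fun i => (part lam i.+1 <= part mu i <= part lam i)%N) (iota 0 (size lam)).
(* variables given in reverse order: the head is the last variable x_m *)
Fixpoint macP_rev {K : numFieldType} (q t : K) (xr : seq K) (lam : seq nat) : K :=
  match xr with
  | [::] => if all (fun k => k == 0%N) lam then 1 else 0
  | x :: xr' =>
      \sum_(f : {ffun 'I_(size lam) -> 'I_(head 0%N lam).+1} | hstrip lam (fseq f))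
        psi q t lam (fseq f) * x ^+ (sumn lam - sumn (fseq f)) *
        macP_rev q t xr' (fseq f)
  end.
Definition macP {K : numFieldType} (q t : K) (xs : seq K) (lam : seq nat) : K :=
  macP_rev q t (rev xs) lam.

Definition Ffun {K : numFieldType} (u t : K) (m n : nat) (x y : seq K) : K :=
  \sum_(I : {set 'I_m})
    (- u) ^+ #|I| * t ^+ 'C(#|I|, 2) *
    (\prod_(i in I) \prod_(j in ~: I)
        ((t * nth 0 x i - nth 0 x j) / (nth 0 x i - nth 0 x j))) *
    (\prod_(i in I) \prod_(j < n)
        ((1 - nth 0 x i * nth 0 y j) / (1 - t * nth 0 x i * nth 0 y j))).
Definition Vz {K : numFieldType} (u z q t : K) (m n : nat) (lam mu : seq nat) : K :=
  Ffun u t m n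
    [seq (z * q ^+ part lam i * t ^+ (m - i.+1))^-1 | i <- iota 0 m]
    [seq q ^+ part mu j * t ^+ (n - j.+1) | j <- iota 0 n].
(* value at z = 1 of the rational function z |-> V_{lambda mu}(u,z;q,t) *)
Definition V1 {K : numFieldType} (u q t : K) (m n : nat) (lam mu : seq nat) : K :=
  lim ((fun z => Vz u z q t m n lam mu) @ (1 : K)^').

Inductive mtype := TypeI | TypeII.

Definition Vqt {K : numFieldType} (typ : mtype) (q t : K) (m n : nat)
  (lam mu : seq nat) : K :=
  match typ with
  | TypeI => V1 1 q t m n lam mu
  | TypeII => q ^- sumn lam * V1 (t ^+ (n - m).+1) q t m n lam mu
  end.

Definition Omega {K : numFieldType} (typ : mtype) (q t : K) (m n : nat)
  (lam mu : seq nat) : K :=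
  Vqt typ q t m n lam mu * qtpoch (q * t ^ (m%:Z - 1)) q t lam *
  \prod_(i < m) \prod_(j < n)
    (qpochZ (q * t ^ (j%:Z - i%:Z + m%:Z - n%:Z - 1)) q
            ((part lam i)%:Z - (part mu j)%:Z) /
     qpochZ (q * t ^ (j%:Z - i%:Z + m%:Z - n%:Z)) q
            ((part lam i)%:Z - (part mu j)%:Z)).

Definition term {K : numFieldType} (typ : mtype) (q t : K) (m n : nat)
  (a b x y : seq K) (lam mu : seq nat) : K :=
  t ^+ (nfun lam + nfun mu) * macP q t x lam * macP q t y mu /
  (cprime q t lam * cprime q t mu) *
  (\prod_(c <- a) qtpoch c q t mu) / (\prod_(c <- b) qtpoch c q t mu) *
  Omega typ q t m n lam mu.

(* lambda_i >= mu_{i-m+n} for all i (1-indexed; zero beyond the length) *)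
Definition interlace (m n : nat) (lam mu : seq nat) : bool :=
  all (fun i => (part mu (i + (n - m)) <= part lam i)%N) (iota 0 m).

(* Partitions of length <= k and
   parts <= N are encoded (uniquely) as nonincreasing f : 'I_k -> 'I_N.+1. *)
Definition Psum {K : numFieldType} (typ : mtype) (q t : K) (m n : nat)
  (a b x y : seq K) (N : nat) : K :=
  \sum_(f : {ffun 'I_m -> 'I_N.+1} | sorted geq (fseq f))
   \sum_(g : {ffun 'I_n -> 'I_N.+1} |
          [&& sorted geq (fseq g), interlace m n (fseq f) (fseq g)
            & (sumn (fseq f) + sumn (fseq g) <= N)%N])
     term typ q t m n a b x y (fseq f) (fseq g).

Definition prefactor {K : numFieldType} (q t : K) (m n : nat) (x : seq K) : K :=
  \prod_(i < m)
    (qpoch_inf (nth 0 x i) q / qpoch_inf (nth 0 x i * t ^ (m%:Z - n%:Z - 1)) q).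

Definition Phi {K : numFieldType} (typ : mtype) (q t : K) (m n : nat)
  (a b x y : seq K) : K :=
  prefactor q t m n x * lim (Psum typ q t m n a b x y @ \oo).

(* Put x_m = 0 and y_n = 0.  Since P_lambda vanishes in fewer than l(lambda)
   variables, only the pairs ((lambda,0),(mu,0)) survive, and the two partial
   sums can be compared term by term; trailing zero parts change neither
   P_lambda, c'_lambda, n(lambda) nor (a;q,t)_lambda.

   In V, write F as a sum over subsets I.  By genericity of (q,t) the
   I-summand has at z = 1 a zero for every 1 - x_i^{-1} y_j = 0 and a pole for
   every 1 - t x_i^{-1} y_j = 0, and each pole in row i comes with zeros in rows
   i and i+1 (else a cross factor t x_i^{-1} - x_{i+1}^{-1} kills the summand).
   So the limit at z = 1 exists, and it is 0 as soon as I contains a row with a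
   zero, e.g. the last row when lambda_m = mu_n = 0.  The other summands are
   those for (m-1,n-1) times factors tending to 1, so V is unchanged.

   In Omega, the last column of the double product turns (qt^{m-1};q,t)_lambda
   into (qt^{m-2};q,t)_lambda and the last row contributes
   t^{|mu|} (t^{n-1};q,t)_mu / (t^n;q,t)_mu: the quotient is absorbed by the
   new parameters and the power of t by P_mu(ty) = t^{|mu|} P_mu(y). *)

From HB Require Import structures.
From mathcomp Require Import all_boot all_order all_algebra.
From mathcomp Require Import boolp classical_sets topology normedtype sequences.
From mathcomp Require Import ring zify.
Import Order.TTheory GRing.Theory Num.Theory numFieldNormedType.Exports.
Local Open Scope classical_set_scope.
Local Open Scope ring_scope.
Set Implicit Arguments. Unset Strict Implicit. Unset Printing Implicit Defensive.

Section LimitsAtOne.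
Variable K : numFieldType.

Lemma lim_sum {T : Type} (F : set_system T) {FF : ProperFilter F} (I : Type)
    (r : seq I) (P : pred I) (f : I -> T -> K) :
  (forall i, P i -> cvg (f i x @[x --> F])) ->
  lim ((\sum_(i <- r | P i) f i x) @[x --> F]) =
  \sum_(i <- r | P i) lim (f i x @[x --> F]).
Proof.
by move=> cvgf; apply: norm_cvg_lim; apply: cvg_big cvgf => //; exact: add_continuous.
Qed.

Lemma cvg_bigprod {T : Type} (F : set_system T) {FF : Filter F} (I : Type)
    (r : seq I) (P : pred I) (f : I -> T -> K) (a : I -> K) :
  (forall i, P i -> f i x @[x --> F] --> a i) ->
  (\prod_(i <- r | P i) f i x) @[x --> F] --> \prod_(i <- r | P i) a i.
Proof. by move=> cvgf; apply: cvg_big cvgf => //; exact: mul_continuous. Qed.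

Lemma near_dnbhs1_neq0 : \forall z \near (1 : K)^', z != 0.
Proof.
apply: (@cvgr_neq0 _ _ _ _ _ (fun z : K => z) 1); last exact: oner_neq0.
exact: cvg_within.
Qed.

Lemma cvg_at1_inv : (fun z : K => z^-1) @ (1 : K)^' --> (1 : K).
Proof.
have cvg_id : (fun z : K => z) @ (1 : K)^' --> (1 : K) by exact: cvg_within.
by rewrite -[X in _ --> X]invr1; exact: cvgV (oner_neq0 K) cvg_id.
Qed.

Lemma cvg_at1_oneB_invM (a : K) : (fun z : K => 1 - z^-1 * a) @ (1 : K)^' --> 1 - a.
Proof.
have cvg_inv_a : (fun z : K => z^-1 * a) @ (1 : K)^' --> 1 * a.
  by apply: cvgMr_tmp; exact: cvg_at1_inv.
by rewrite mul1r in cvg_inv_a; exact: cvgB (cvg_cst _) cvg_inv_a.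
Qed.

Lemma cvg_at1_oneB_inv_exp k :
  (fun z : K => (1 - z^-1) ^+ k) @ (1 : K)^' --> (1 - 1 : K) ^+ k.
Proof.
elim: k => [|k IHk]; first by under eq_cvg do rewrite expr0; rewrite expr0; exact: cvg_cst.
under eq_cvg do rewrite exprS; rewrite exprS; apply: cvgM IHk.
by have := cvg_at1_oneB_invM (a := 1); under eq_cvg do rewrite mulr1.
Qed.

End LimitsAtOne.

Section GenericParameters.
Variables (K : numFieldType) (q t : K).
Hypotheses (q_neq0 : q != 0) (t_neq0 : t != 0).
Hypothesis qt_generic : forall i j : int, (i != 0) || (j != 0) -> q ^ i * t ^ j != 1.

Lemma qt_monomial_neq0 a b : q ^+ a * t ^+ b != 0.
Proof. by rewrite mulf_neq0 // expf_neq0. Qed.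

Lemma eq_qt_monomial a b c d :
  (q ^+ a * t ^+ b == q ^+ c * t ^+ d) = (a == c) && (b == d).
Proof.
apply/idP/idP => [/eqP E|/andP[/eqP-> /eqP->] //].
have E1 : q ^ (a%:Z - c%:Z) * t ^ (b%:Z - d%:Z) = 1.
  by rewrite !expfzDr // -!invr_expz mulrACA -invfM -E mulfV ?qt_monomial_neq0.
move: (@qt_generic (a%:Z - c%:Z) (b%:Z - d%:Z)); rewrite E1 eqxx !subr_eq0 !eqz_nat.
by case: (a == c); case: (b == d) => // /(_ isT).
Qed.

End GenericParameters.

Lemma sum_ord_indicator N k (P : pred nat) :
  (\sum_(j < N) ((j == k :> nat) && P j) = (k < N) && P k)%N.
Proof.
case: (ltnP k N) => hk /=.
  rewrite (bigD1 (Ordinal hk)) //= eqxx big1 ?addn0 // => j /negbTE ne_jk.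
  by rewrite -(inj_eq val_inj) /= in ne_jk; rewrite ne_jk.
by rewrite big1 // => j _; rewrite (ltn_eqF (leq_trans (ltn_ord j) hk)).
Qed.

Lemma count_adjacent_pairs (z : nat -> bool) M :
  (\sum_(0 <= i < M) (z i && z i.+1) + has z (iota 0 M.+1)
     <= \sum_(0 <= i < M.+1) z i)%N.
Proof.
elim: M => [|M IHM]; first by rewrite big_geq // big_nat1 /=; case: (z 0).
rewrite big_nat_recr // [X in (_ <= X)%N]big_nat_recr //.
rewrite -[M.+2]addn1 iotaD has_cat has_seq1 add0n.
have has_zM : z M -> has z (iota 0 M.+1).
  by move=> zM; apply/hasP; exists M; rewrite // mem_iota add0n ltnSn.
move: IHM has_zM; case: (z M); case: (z M.+1); case: has => /=; lia.
Qed.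

Lemma count_chain (Z B : nat -> bool) M :
  (forall i, (i < M)%N -> B i -> [&& Z i, Z i.+1 & (i.+1 < M)%N]) ->
  (\sum_(0 <= i < M) B i + has Z (iota 0 M) <= \sum_(0 <= i < M) Z i)%N.
Proof.
case: M => [|M] chainBZ; first by rewrite !big_geq.
rewrite big_nat_recr //.
have -> : B M = false by apply/negP => /(chainBZ _ (ltnSn _)) /and3P[_ _]; rewrite ltnn.
rewrite /= addn0; apply: leq_trans (count_adjacent_pairs Z M); rewrite leq_add2r.
rewrite big_nat_cond [X in (_ <= X)%N]big_nat_cond; apply: leq_sum => i /andP[/andP[_ hi] _].
by case hB : (B i) => //; case/and3P: (chainBZ i (ltnW hi) hB) => -> ->.
Qed.

Lemma cross_ratio_scale (K : fieldType) (t w a b : K) : w != 0 ->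
  (t * (w * a) - w * b) / (w * a - w * b) = (t * a - b) / (a - b).
Proof.
move=> w0; have -> : t * (w * a) - w * b = w * (t * a - b) by ring.
by rewrite -mulrBr invfM mulrACA mulfV // mul1r.
Qed.

Lemma mulVf_eq1 (K : fieldType) (a b : K) : a != 0 -> (a^-1 * b == 1) = (b == a).
Proof. by move=> a0; rewrite -(inj_eq (mulfI a0)) mulrA mulfV // mul1r mulr1. Qed.

Definition reduced_ratio (K : numFieldType) (a b w : K) : K :=
  (if a == 1 then 1 else 1 - w * a) / (if b == 1 then 1 else 1 - w * b).

Lemma ratio_reduced (K : numFieldType) (w a b : K) :
  (1 - w * a) / (1 - w * b) =
  (1 - w) ^+ (a == 1) / (1 - w) ^+ (b == 1) * reduced_ratio a b w.
Proof.
rewrite /reduced_ratio.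
case: (eqVneq a 1) => [->|_]; case: (eqVneq b 1) => [->|_] /=;
  rewrite ?eqxx ?expr1 ?expr0 ?invr1 ?mulr1 ?mul1r ?divr1 //; exact: mulrC.
Qed.

Lemma cvg_reduced_ratio (K : numFieldType) (a b : K) :
  (fun z => reduced_ratio a b z^-1) @ (1 : K)^' --> reduced_ratio a b 1.
Proof.
have cvg_factor c : (fun z : K => if c == 1 then 1 else 1 - z^-1 * c) @ (1 : K)^' -->
                    (if c == 1 then 1 else 1 - c).
  by case: (c == 1); [exact: cvg_cst | exact: cvg_at1_oneB_invM].
rewrite [X in _ --> X]/reduced_ratio !mul1r.
apply: cvgM (cvg_factor a) _; apply: cvgV (cvg_factor b).
by case: (eqVneq b 1) => [_|b_neq1]; [exact: oner_neq0 | rewrite subr_eq0 eq_sym].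
Qed.

Section FSummand.
Variables (K : numFieldType) (q t u : K) (M N : nat) (lam mu : nat -> nat).

(* Rows are indexed from 0: [xinv z i] is x_{i+1}^{-1} in V_{lambda mu}(u,z),
   [xinv1 i] its value at z = 1, and [Fterm I] is the I-summand of F. *)

Definition xinv (z : K) (i : nat) : K := (z * q ^+ lam i * t ^+ (M - i.+1))^-1.
Definition xinv1 (i : nat) : K := (q ^+ lam i * t ^+ (M - i.+1))^-1.
Definition yv (j : nat) : K := q ^+ mu j * t ^+ (N - j.+1).

Definition cross_part (c : nat -> K) (I : {set 'I_M}) : K :=
  \prod_(i in I) \prod_(j in ~: I) ((t * c i - c j) / (c i - c j)).
Definition y_part (c : nat -> K) (I : {set 'I_M}) : K :=
  \prod_(i in I) \prod_(j < N) ((1 - c i * yv j) / (1 - t * c i * yv j)).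

Definition Fterm (I : {set 'I_M}) (z : K) : K :=
  (- u) ^+ #|I| * t ^+ 'C(#|I|, 2) * cross_part (xinv z) I * y_part (xinv z) I.
Definition Fterm_coef (I : {set 'I_M}) : K :=
  (- u) ^+ #|I| * t ^+ 'C(#|I|, 2) * cross_part xinv1 I.

Definition zero_order (I : {set 'I_M}) : nat :=
  (\sum_(i in I) \sum_(j < N) ((xinv1 i * yv j == 1)%R : nat))%N.
Definition pole_order (I : {set 'I_M}) : nat :=
  (\sum_(i in I) \sum_(j < N) ((t * xinv1 i * yv j == 1)%R : nat))%N.
Definition Fterm_regular (I : {set 'I_M}) (w : K) : K :=
  \prod_(i in I) \prod_(j < N) reduced_ratio (xinv1 i * yv j) (t * xinv1 i * yv j) w.

Lemma xinvE z i : xinv z i = z^-1 * xinv1 i.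
Proof. by rewrite /xinv /xinv1 -mulrA invfM. Qed.

Lemma cross_part_xinv z I : z != 0 -> cross_part (xinv z) I = cross_part xinv1 I.
Proof.
move=> z0; apply: eq_bigr => i _; apply: eq_bigr => j _.
by rewrite !xinvE cross_ratio_scale // invr_eq0.
Qed.

Lemma y_part_xinv z I :
  y_part (xinv z) I =
  (1 - z^-1) ^+ zero_order I / (1 - z^-1) ^+ pole_order I * Fterm_regular I z^-1.
Proof.
have factor_ij i j : (1 - xinv z i * yv j) / (1 - t * xinv z i * yv j) =
    (1 - z^-1 * (xinv1 i * yv j)) / (1 - z^-1 * (t * xinv1 i * yv j)).
  by rewrite xinvE; congr (_ / _); ring.
rewrite /y_part /zero_order /pole_order /Fterm_regular.
under eq_bigr => i _ do under eq_bigr => j _ do rewrite factor_ij ratio_reduced.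
under eq_bigr => i _ do rewrite big_split prodf_div /= !prodrXr.
by rewrite big_split prodf_div /= !prodrXr.
Qed.

Lemma FtermE I z : z != 0 ->
  Fterm I z = Fterm_coef I *
    ((1 - z^-1) ^+ zero_order I / (1 - z^-1) ^+ pole_order I * Fterm_regular I z^-1).
Proof. by move=> z0; rewrite /Fterm cross_part_xinv // y_part_xinv. Qed.

Lemma cvg_Fterm_regular I :
  (fun z => Fterm_regular I z^-1) @ (1 : K)^' --> Fterm_regular I 1.
Proof. by apply: cvg_bigprod => i _; apply: cvg_bigprod => j _; exact: cvg_reduced_ratio. Qed.

Hypotheses (q_neq0 : q != 0) (t_neq0 : t != 0).
Hypothesis qt_generic : forall i j : int, (i != 0) || (j != 0) -> q ^ i * t ^ j != 1.
Hypothesis le_MN : (M <= N)%N.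
Hypothesis lam_noninc : forall i, (lam i.+1 <= lam i)%N.
Hypothesis mu_noninc : forall i, (mu i.+1 <= mu i)%N.
Hypothesis interlacing : forall i, (i < M)%N -> (mu (i + (N - M)) <= lam i)%N.

Lemma zero_at (i : 'I_M) (j : 'I_N) :
  (xinv1 i * yv j == 1) = (j == (i + (N - M))%N :> nat) && (mu j == lam i).
Proof.
have hi := ltn_ord i; have hj := ltn_ord j.
rewrite /xinv1 mulVf_eq1 ?qt_monomial_neq0 // /yv eq_qt_monomial // andbC.
by congr (_ && _); apply/eqP/eqP; lia.
Qed.

Lemma pole_at (i : 'I_M) (j : 'I_N) :
  (t * xinv1 i * yv j == 1) = (j == (i.+1 + (N - M))%N :> nat) && (mu j == lam i).
Proof.
have hi := ltn_ord i; have hj := ltn_ord j.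
have -> : t * xinv1 i * yv j = xinv1 i * (q ^+ mu j * t ^+ (N - j)).
  by rewrite /yv (_ : (N - j)%N = (N - j.+1).+1) ?exprS; [ring | lia].
rewrite /xinv1 mulVf_eq1 ?qt_monomial_neq0 // eq_qt_monomial // andbC.
by congr (_ && _); apply/eqP/eqP; lia.
Qed.

Definition vals (I : {set 'I_M}) : seq nat := map (@nat_of_ord M) (enum I).

Lemma mem_vals I (i : 'I_M) : (nat_of_ord i \in vals I) = (i \in I).
Proof. by rewrite (mem_map (@ord_inj M)) mem_enum. Qed.

Lemma sum_set_nat (I : {set 'I_M}) (g : nat -> bool) :
  (\sum_(i in I) (g i : nat) = \sum_(0 <= i < M) ((i \in vals I) && g i : nat))%N.
Proof.
by rewrite big_mkord big_mkcond /=; apply: eq_bigr => i _; rewrite mem_vals; case: (i \in I).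
Qed.

Lemma zero_order_nat I :
  zero_order I = (\sum_(0 <= i < M) ((i \in vals I) && (mu (i + (N - M)) == lam i)))%N.
Proof.
rewrite /zero_order -(sum_set_nat I (fun i => mu (i + (N - M))%N == lam i)).
apply: eq_bigr => i _; under eq_bigr => j _ do rewrite zero_at.
rewrite (sum_ord_indicator _ _ (fun k => mu k == lam i)) (_ : (i + (N - M) < N)%N) //.
by have := ltn_ord i; lia.
Qed.

Lemma pole_order_nat I :
  pole_order I = (\sum_(0 <= i < M)
    ((i \in vals I) && ((i.+1 + (N - M) < N)%N && (mu (i.+1 + (N - M)) == lam i))))%N.
Proof.
rewrite /pole_order -(sum_set_nat I (fun i =>
  (i.+1 + (N - M) < N)%N && (mu (i.+1 + (N - M))%N == lam i))).
by apply: eq_bigr => i _; under eq_bigr => j _ do rewrite pole_at;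
  rewrite (sum_ord_indicator _ _ (fun k => mu k == lam i)).
Qed.

Lemma xinv1_succ i : (i.+1 < M)%N -> lam i.+1 = lam i -> t * xinv1 i = xinv1 i.+1.
Proof.
move=> ltiM lam_eq; rewrite /xinv1 lam_eq (_ : (M - i.+1)%N = (M - i.+2).+1); last lia.
by rewrite exprS; field; rewrite !expf_neq0.
Qed.

Lemma Fterm_coef_eq0 (I : {set 'I_M}) (i j : 'I_M) :
  i \in I -> j \notin I -> t * xinv1 i = xinv1 j -> Fterm_coef I = 0.
Proof.
move=> iI jI ij_eq; apply/eqP; rewrite /Fterm_coef /cross_part mulf_eq0 (bigD1 i) //=.
by rewrite (bigD1 j) ?inE //= ij_eq subrr !mul0r eqxx orbT.
Qed.

(* A pole in row i (at column i+1+N-M) forces zeros in rows i and i+1, both in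
   I: otherwise the factor t x_i^{-1} - x_{i+1}^{-1} of the coefficient is 0. *)
Lemma pole_chain I i :
  Fterm_coef I != 0 -> i \in vals I -> (i.+1 + (N - M) < N)%N ->
  mu (i.+1 + (N - M))%N = lam i ->
  [&& mu (i + (N - M))%N == lam i, i.+1 \in vals I,
      mu (i.+1 + (N - M))%N == lam i.+1 & (i.+1 < M)%N].
Proof.
move=> coef_neq0 iI ltN mu_eq; have ltiM : (i.+1 < M)%N by lia.
have lam_eq : lam i.+1 = lam i.
  by have := interlacing ltiM; have := lam_noninc i; rewrite mu_eq; lia.
have mu_eq' : mu (i + (N - M))%N = lam i.
  have := interlacing (ltnW ltiM); have := mu_noninc (i + (N - M)).
  by rewrite -addSn mu_eq; lia.
rewrite mu_eq' lam_eq mu_eq !eqxx ltiM /= andbT.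
apply: contraNT coef_neq0 => i1_notin; apply/eqP.
case/mapP: iI => i0; rewrite mem_enum => i0I i_eq.
apply: (Fterm_coef_eq0 i0I (j := Ordinal ltiM)); first by rewrite -mem_vals.
by rewrite -i_eq xinv1_succ.
Qed.

Lemma pole_order_le I : Fterm_coef I != 0 ->
  (pole_order I + has (fun i => (i \in vals I) && (mu (i + (N - M)) == lam i)) (iota 0 M)
     <= zero_order I)%N.
Proof.
move=> coef_neq0; rewrite zero_order_nat pole_order_nat; apply: count_chain.
move=> i _ /andP[iI /andP[ltN /eqP mu_eq]].
by case/and4P: (pole_chain coef_neq0 iI ltN mu_eq) => -> -> -> ->; rewrite iI.
Qed.

Lemma Fterm_cvg_coef0 I : Fterm_coef I = 0 -> Fterm I z @[z --> (1 : K)^'] --> 0.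
Proof.
move=> coef0; apply: cvg_trans (near_eq_cvg _) (cvg_cst (0 : K)).
near=> z; rewrite FtermE ?coef0 ?mul0r //; near: z; exact: near_dnbhs1_neq0.
Unshelve. all: by end_near.
Qed.

Lemma Fterm_cvg_coef I : Fterm_coef I != 0 ->
  Fterm I z @[z --> (1 : K)^'] -->
  Fterm_coef I * ((1 - 1) ^+ (zero_order I - pole_order I) * Fterm_regular I 1).
Proof.
move=> coef_neq0.
have le_pz : (pole_order I <= zero_order I)%N.
  exact: leq_trans (leq_addr _ _) (pole_order_le coef_neq0).
apply: cvg_trans (near_eq_cvg _) _; last first.
  apply: cvgM (cvg_cst _) _.
  by apply: cvgM; [exact: cvg_at1_oneB_inv_exp | exact: cvg_Fterm_regular].
near=> z; have z0 : z != 0 by near: z; exact: near_dnbhs1_neq0.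
have z1 : z != 1 by near: z; exact: nbhs_dnbhs_neq.
rewrite FtermE // -[in X in _ = _ * (X / _ * _)](subnK le_pz) exprD mulfK //.
by rewrite expf_neq0 // subr_eq0 eq_sym invr_eq1.
Unshelve. all: by end_near.
Qed.

Lemma Fterm_cvg I : cvg (Fterm I z @[z --> (1 : K)^']).
Proof.
by have [/Fterm_cvg_coef0|/Fterm_cvg_coef] := eqVneq (Fterm_coef I) 0 => /cvgP.
Qed.

Lemma Fterm_cvg0 (I : {set 'I_M}) (i0 : 'I_M) :
  i0 \in I -> mu (i0 + (N - M))%N = lam i0 -> Fterm I z @[z --> (1 : K)^'] --> 0.
Proof.
move=> i0I mu_eq; have [|coef_neq0] := eqVneq (Fterm_coef I) 0; first exact: Fterm_cvg_coef0.
have has_zero : has (fun i => (i \in vals I) && (mu (i + (N - M))%N == lam i)) (iota 0 M).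
  by apply/hasP; exists (val i0); rewrite ?mem_iota ?ltn_ord // mem_vals i0I mu_eq eqxx.
have := pole_order_le coef_neq0; rewrite has_zero addn1 => lt_pz.
have := Fterm_cvg_coef coef_neq0.
by rewrite subrr expr0n subn_eq0 leqNgt lt_pz /= mul0r mulr0.
Qed.

End FSummand.

Lemma widen_ord_inj m : injective (widen_ord (leqnSn m)).
Proof. by move=> i j [/val_inj]. Qed.

Definition widen_set m (I : {set 'I_m}) : {set 'I_m.+1} := widen_ord (leqnSn m) @: I.
Definition narrow_set m (I : {set 'I_m.+1}) : {set 'I_m} := widen_ord (leqnSn m) @^-1: I.

Lemma mem_widen_set m (I : {set 'I_m}) i :
  (widen_ord (leqnSn m) i \in widen_set I) = (i \in I).
Proof. exact/mem_imset/widen_ord_inj. Qed.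

Lemma ord_max_notin_widen_set m (I : {set 'I_m}) : ord_max \notin widen_set I.
Proof.
by apply/imsetP => -[i _ /(congr1 val) /= eq_im]; move: (ltn_ord i); rewrite -eq_im ltnn.
Qed.

Lemma widen_setK m : cancel (@widen_set m) (@narrow_set m).
Proof. by move=> I; apply/setP => i; rewrite inE mem_widen_set. Qed.

Lemma narrow_setK m (I : {set 'I_m.+1}) : ord_max \notin I -> widen_set (narrow_set I) = I.
Proof.
move=> maxI; apply/setP => j; have [ltjm|lemj] := ltnP j m.
  have -> : j = widen_ord (leqnSn m) (Ordinal ltjm) by exact: val_inj.
  by rewrite mem_widen_set inE.
have -> : j = ord_max by apply: val_inj => /=; have := ltn_ord j; lia.
by rewrite (negbTE maxI) (negbTE (ord_max_notin_widen_set _)).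
Qed.

Lemma card_widen_set m (I : {set 'I_m}) : #|widen_set I| = #|I|.
Proof. exact/card_imset/widen_ord_inj. Qed.

Section DropLastPart.
Variables (K : numFieldType) (q t u : K) (m n : nat) (lam mu : nat -> nat).
Hypotheses (q_neq0 : q != 0) (t_neq0 : t != 0).
Hypothesis qt_generic : forall i j : int, (i != 0) || (j != 0) -> q ^ i * t ^ j != 1.

Local Notation xinvL := (xinv q t m.+1 lam).
Local Notation xinvR := (xinv q t m lam).
Local Notation yvL := (yv q t n.+1 mu).
Local Notation yvR := (yv q t n mu).
Local Notation c := (xinv1 q t m.+1 lam).

Definition last_factor (i : nat) (z : K) : K :=
  (t * xinvL z i - xinvL z m) / (xinvL z i - xinvL z m) *
  ((1 - xinvL z i * yvL n) / (1 - t * xinvL z i * yvL n)).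

Lemma xinv_succ z i : (i < m)%N -> xinvL z i = t^-1 * xinvR z i.
Proof.
move=> ltim; rewrite /xinv (_ : (m.+1 - i.+1)%N = (m - i.+1).+1); last lia.
by rewrite exprS mulrCA invfM.
Qed.

Lemma yv_succ j : (j < n)%N -> yvL j = t * yvR j.
Proof.
move=> ltjn; rewrite /yv (_ : (n.+1 - j.+1)%N = (n - j.+1).+1); last lia.
by rewrite exprS mulrCA.
Qed.

Lemma cross_part_widen_set z (I : {set 'I_m}) :
  cross_part t (xinvL z) (widen_set I) =
  cross_part t (xinvR z) I *
  \prod_(i in I) ((t * xinvL z i - xinvL z m) / (xinvL z i - xinvL z m)).
Proof.
rewrite /cross_part big_imset /=; last by move=> i j _ _; exact: widen_ord_inj.
rewrite -big_split /=; apply: eq_bigr => i _.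
rewrite big_mkcond /= big_ord_recr /= -big_mkcond /= inE.
rewrite (negbTE (ord_max_notin_widen_set I)) /=; congr (_ * _).
apply: eq_big => [j|j _]; first by rewrite !inE mem_widen_set.
by rewrite /= !xinv_succ // cross_ratio_scale // invr_eq0.
Qed.

Lemma y_part_widen_set z (I : {set 'I_m}) :
  y_part q t n.+1 mu (xinvL z) (widen_set I) =
  y_part q t n mu (xinvR z) I *
  \prod_(i in I) ((1 - xinvL z i * yvL n) / (1 - t * xinvL z i * yvL n)).
Proof.
rewrite /y_part big_imset /=; last by move=> i j _ _; exact: widen_ord_inj.
rewrite -big_split /=; apply: eq_bigr => i _; rewrite big_ord_recr /=; congr (_ * _).
apply: eq_bigr => j _; rewrite /= xinv_succ // yv_succ //.
have tK : t^-1 * xinvR z i * (t * yvR j) = xinvR z i * yvR j.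
  by rewrite mulrACA mulVf // mul1r.
by rewrite tK -!mulrA -[xinvR z i * _]tK !mulrA.
Qed.

Lemma Fterm_widen_set (I : {set 'I_m}) z :
  Fterm q t u n.+1 lam mu (widen_set I) z =
  Fterm q t u n lam mu I z * \prod_(i in I) last_factor i z.
Proof.
rewrite /Fterm card_widen_set cross_part_widen_set y_part_widen_set.
by rewrite /last_factor [X in _ = _ * X]big_split /=; ring.
Qed.

Hypotheses (lam_m : lam m = 0%N) (mu_n : mu n = 0%N).

Lemma last_factorE i z : z != 0 ->
  last_factor i z =
  (t * c i - 1) / (c i - 1) * ((1 - z^-1 * c i) / (1 - z^-1 * (t * c i))).
Proof.
move=> z0; have c_m : c m = 1 by rewrite /xinv1 lam_m subnn !expr0 mulr1 invr1.
have yvL_n : yvL n = 1 by rewrite /yv mu_n subnn !expr0 mulr1.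
rewrite /last_factor !xinvE cross_ratio_scale ?invr_eq0 // c_m yvL_n !mulr1.
by congr (_ * (_ / (1 - _))); exact: mulrCA.
Qed.

Lemma xinv1_neq1 (i : 'I_m) : c i != 1.
Proof.
rewrite /xinv1 invr_eq1.
have := eq_qt_monomial q_neq0 t_neq0 qt_generic (lam i) (m.+1 - i.+1) 0 0.
by rewrite !expr0 mulr1 => ->; apply/negP => /andP[_ /eqP]; have := ltn_ord i; lia.
Qed.

Lemma t_xinv1_eq1 (i : 'I_m) :
  (t * c i == 1) = (lam i == 0%N) && (i == m.-1 :> nat).
Proof.
rewrite mulrC /xinv1 mulVf_eq1 ?qt_monomial_neq0 //.
have := eq_qt_monomial q_neq0 t_neq0 qt_generic 0 1 (lam i) (m.+1 - i.+1).
rewrite expr0 expr1 mul1r => ->; rewrite eq_sym; congr (_ && _).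
by move: (ltn_ord i) => ltim; apply/eqP/eqP; lia.
Qed.

Lemma cvg_prod_last_factor (I : {set 'I_m}) : (forall i, i \in I -> t * c i != 1) ->
  (fun z => \prod_(i in I) last_factor i z) @ (1 : K)^' --> (1 : K).
Proof.
move=> tc_neq1.
have cvg_factors : (fun z => \prod_(i in I)
      ((t * c i - 1) / (c i - 1) * ((1 - z^-1 * c i) / (1 - z^-1 * (t * c i))))) @ (1 : K)^'
    --> \prod_(i in I) ((t * c i - 1) / (c i - 1) * ((1 - c i) / (1 - t * c i))).
  apply: cvg_bigprod => i iI; apply: cvgM (cvg_cst _) _.
  apply: cvgM; first exact: cvg_at1_oneB_invM.
  by apply: cvgV; [rewrite subr_eq0 eq_sym tc_neq1 | exact: cvg_at1_oneB_invM].
have factors_limit1 :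
    \prod_(i in I) ((t * c i - 1) / (c i - 1) * ((1 - c i) / (1 - t * c i))) = 1.
  rewrite big1 // => i iI; have c1 := xinv1_neq1 i; have tc1 := tc_neq1 i iI.
  by field; rewrite !subr_eq0 c1 eq_sym tc1.
rewrite factors_limit1 in cvg_factors; apply: cvg_trans cvg_factors; apply: near_eq_cvg.
near=> z; have z0 : z != 0 by near: z; exact: near_dnbhs1_neq0.
by apply: eq_bigr => i _; rewrite last_factorE.
Unshelve. all: by end_near.
Qed.

Hypothesis le_mn : (m <= n)%N.
Hypothesis lam_noninc : forall i, (lam i.+1 <= lam i)%N.
Hypothesis mu_noninc : forall i, (mu i.+1 <= mu i)%N.
Hypothesis interlacing : forall i, (i < m)%N -> (mu (i + (n - m)) <= lam i)%N.

Lemma lim_Fterm_widen_set (I : {set 'I_m}) :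
  lim (Fterm q t u n.+1 lam mu (widen_set I) z @[z --> (1 : K)^']) =
  lim (Fterm q t u n lam mu I z @[z --> (1 : K)^']).
Proof.
under eq_fun do rewrite Fterm_widen_set.
have [/existsP[i0 /andP[i0I tc1]]|no_tc1] := boolP [exists i in I, t * c i == 1].
  (* the extra factor vanishes, and row i0 carries an uncancelled zero *)
  move: (tc1); rewrite t_xinv1_eq1 => /andP[/eqP lam0 _].
  rewrite (norm_cvg_lim (l := 0)); last first.
    apply: cvg_trans (near_eq_cvg _) (cvg_cst (0 : K)); near=> z.
    have z0 : z != 0 by near: z; exact: near_dnbhs1_neq0.
    by rewrite (bigD1 i0) //= last_factorE // (eqP tc1) subrr !mul0r mulr0.
  apply/esym/norm_cvg_lim.
  apply: (Fterm_cvg0 u q_neq0 t_neq0 qt_generic le_mn lam_noninc mu_noninc interlacing i0I).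
  by have := interlacing (ltn_ord i0); rewrite lam0; lia.
have tc_neq1 i : i \in I -> t * c i != 1.
  by move=> iI; apply: contra no_tc1 => tc1; apply/existsP; exists i; rewrite iI.
apply: norm_cvg_lim; rewrite -[X in _ --> X]mulr1; apply: cvgM.
  exact: (Fterm_cvg q_neq0 t_neq0 qt_generic le_mn lam_noninc mu_noninc interlacing).
exact: cvg_prod_last_factor.
Unshelve. all: by end_near.
Qed.

Lemma lim_sum_Fterm_drop_last :
  lim ((fun z => \sum_(I : {set 'I_m.+1}) Fterm q t u n.+1 lam mu I z) @ (1 : K)^') =
  lim ((fun z => \sum_(I : {set 'I_m}) Fterm q t u n lam mu I z) @ (1 : K)^').
Proof.
have last_zero : mu (m + (n.+1 - m.+1))%N = lam m by rewrite subSS subnKC // mu_n lam_m.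
have interlacingL i : (i < m.+1)%N -> (mu (i + (n.+1 - m.+1)) <= lam i)%N.
  by rewrite ltnS leq_eqVlt => /orP[/eqP ->|/interlacing]; rewrite ?last_zero ?subSS.
have le_mn1 : (m.+1 <= n.+1)%N := le_mn.
have FtermL_cvg := Fterm_cvg q_neq0 t_neq0 qt_generic le_mn1 lam_noninc mu_noninc interlacingL.
have FtermR_cvg := Fterm_cvg q_neq0 t_neq0 qt_generic le_mn lam_noninc mu_noninc interlacing.
rewrite !lim_sum => [|I _|I _]; [|exact: FtermR_cvg|exact: FtermL_cvg].
rewrite (bigID (fun I : {set 'I_m.+1} => ord_max \in I)) /= big1 ?add0r => [|I maxI].
  rewrite (reindex_onto (@widen_set m) (@narrow_set m)) /= => [|I]; last exact: narrow_setK.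
  apply: eq_big => [I|I _]; first by rewrite ord_max_notin_widen_set widen_setK eqxx.
  exact: lim_Fterm_widen_set.
apply: norm_cvg_lim.
exact: (Fterm_cvg0 u q_neq0 t_neq0 qt_generic le_mn1 lam_noninc mu_noninc interlacingL maxI).
Qed.
End DropLastPart.

Lemma part_rcons0 s i : part (rcons s 0%N) i = part s i.
Proof. exact: nth_rcons_default. Qed.

Lemma part_size s : part s (size s) = 0%N.
Proof. by rewrite /part nth_default. Qed.

Lemma part_leq s i j : sorted geq s -> (i <= j)%N -> (part s j <= part s i)%N.
Proof.
move=> s_sorted le_ij; have [lt_js|le_sj] := ltnP j (size s); last by rewrite /part nth_default.
have geq_trans : transitive geq by move=> a b c /= h1 h2; exact: leq_trans h2 h1.
have := @sorted_leq_nth _ geq geq_trans (@leqnn) 0%N s s_sorted i j.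
by rewrite !inE => /(_ (leq_ltn_trans le_ij lt_js) lt_js le_ij).
Qed.

Lemma part_noninc s : sorted geq s -> forall i, (part s i.+1 <= part s i)%N.
Proof. by move=> s_sorted i; exact: part_leq. Qed.

Lemma interlace_part m n l u : interlace m n l u ->
  forall i, (i < m)%N -> (part u (i + (n - m)) <= part l i)%N.
Proof. by move/allP => inter i ltim; apply: inter; rewrite mem_iota. Qed.

Lemma sumn_part s : sumn s = (\sum_(j < size s) part s j)%N.
Proof.
by elim: s => [|x s IHs]; [rewrite big_ord0 | rewrite /= big_ord_recl /= IHs].
Qed.

Lemma pconj_rcons0 s j : pconj (rcons s 0%N) j = pconj s j.
Proof. by rewrite /pconj -cats1 count_cat /= ?ltn0 ?addn0. Qed.

Lemma nfun_rcons0 s : nfun (rcons s 0%N) = nfun s.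
Proof.
rewrite /nfun size_rcons big_ord_recr /= part_rcons0 part_size muln0 addn0.
by apply: eq_bigr => i _; rewrite part_rcons0.
Qed.

Lemma cprime_rcons0 (K : numFieldType) (q t : K) s : cprime q t (rcons s 0%N) = cprime q t s.
Proof.
rewrite /cprime size_rcons big_ord_recr /= part_rcons0 part_size big_ord0 mulr1.
apply: eq_bigr => i _; rewrite /= part_rcons0; apply: eq_bigr => j _.
by rewrite /arm /leg part_rcons0 pconj_rcons0.
Qed.

Lemma qtpoch_rcons0 (K : numFieldType) (b q t : K) s :
  qtpoch b q t (rcons s 0%N) = qtpoch b q t s.
Proof.
rewrite /qtpoch size_rcons big_ord_recr /= part_rcons0 part_size /qpoch big_ord0 mulr1.
by apply: eq_bigr => i _; rewrite part_rcons0.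
Qed.

Lemma nth_map_iota (T : Type) (x0 : T) (f : nat -> T) M i :
  (i < M)%N -> nth x0 (map f (iota 0 M)) i = f i.
Proof. by move=> ltiM; rewrite (nth_map 0%N) ?size_iota ?nth_iota. Qed.

Lemma VzE (K : numFieldType) (u z q t : K) M N (lam mu : seq nat) :
  Vz u z q t M N lam mu = \sum_(I : {set 'I_M}) Fterm q t u N (part lam) (part mu) I z.
Proof.
rewrite /Vz /Ffun; apply: eq_bigr => I _; rewrite /Fterm /cross_part /y_part.
by congr (_ * _ * _); apply: eq_bigr => i _; apply: eq_bigr => j _; rewrite !nth_map_iota.
Qed.

Lemma sorted_rcons0 s : sorted geq (rcons s 0%N) = sorted geq s.
Proof. by case: s => [|k s] //=; rewrite rcons_path andbT. Qed.

Lemma interlace_rcons0 m n lam mu : (m <= n)%N -> size lam = m -> size mu = n ->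
  interlace m.+1 n.+1 (rcons lam 0%N) (rcons mu 0%N) = interlace m n lam mu.
Proof.
move=> le_mn size_lam size_mu.
rewrite /interlace subSS -[m.+1]addn1 iotaD all_cat /= add0n !part_rcons0 andbT.
have -> : part lam m = 0%N by rewrite -size_lam part_size.
have -> : part mu (m + (n - m)) = 0%N by rewrite subnKC // -size_mu part_size.
by rewrite leqnn andbT; apply: eq_all => i; rewrite !part_rcons0.
Qed.

Lemma part_gt0_size s k : (0 < part s k)%N -> (k < size s)%N.
Proof.
by move=> part_gt0; rewrite ltnNge; apply: contraL part_gt0 => ?; rewrite /part nth_default.
Qed.

Lemma size_fseq k N (f : {ffun 'I_k -> 'I_N}) : size (fseq f) = k.
Proof. by rewrite /fseq size_map size_enum_ord. Qed.

Lemma part_fseq k N (f : {ffun 'I_k -> 'I_N}) (j : 'I_k) : part (fseq f) j = f j.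
Proof. by rewrite /part /fseq (nth_map j) ?size_enum_ord // nth_ord_enum. Qed.

Lemma fseq_inj k N : injective (@fseq k N).
Proof. by move=> f g fg; apply/ffunP => j; apply: val_inj; rewrite /= -!part_fseq fg. Qed.

Lemma hstrip_le lam s : hstrip lam s ->
  forall i, (i < size lam)%N -> (part lam i.+1 <= part s i <= part lam i)%N.
Proof. by move/allP => strip i lti; apply: strip; rewrite mem_iota. Qed.

Lemma hstrip_refl lam : sorted geq lam -> hstrip lam lam.
Proof. by move=> lam_sorted; apply/allP => i _; rewrite leqnn andbT part_leq. Qed.

Lemma sumn_hstrip_le lam s : size s = size lam -> hstrip lam s -> (sumn s <= sumn lam)%N.
Proof.
move=> size_s strip; rewrite !sumn_part size_s; apply: leq_sum => i _.
by case/andP: (hstrip_le strip (ltn_ord i)).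
Qed.

Lemma hstrip_sumn_eq lam s :
  size s = size lam -> hstrip lam s -> sumn s = sumn lam -> s = lam.
Proof.
move=> size_s strip sum_eq; apply: (@eq_from_nth _ 0%N) => // i; rewrite size_s => lti.
have le_parts (j : 'I_(size lam)) :
    (part s j <= part lam j ?= iff (part s j == part lam j))%N.
  by apply/leqif_eq; case/andP: (hstrip_le strip (ltn_ord j)).
have sums_eq : (\sum_(j < size lam) part s j = \sum_(j < size lam) part lam j)%N.
  by rewrite -sumn_part -sum_eq sumn_part size_s.
have := (@leqif_sum _ (fun _ => true) _ _ _ (fun j _ => le_parts j)).2.
by rewrite sums_eq eqxx => /esym/forall_inP/(_ (Ordinal lti) isT)/eqP.
Qed.

Section QPochhammer.
Variables (K : numFieldType) (q t : K).
Hypotheses (q_neq0 : q != 0) (t_neq0 : t != 0).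
Hypothesis qt_generic : forall i j : int, (i != 0) || (j != 0) -> q ^ i * t ^ j != 1.

Lemma qpoch_neq0 (e : int) N : qpoch (q * t ^ e) q N != 0.
Proof.
apply/prodf_neq0 => k _; rewrite subr_eq0 eq_sym.
by rewrite mulrAC -exprS; exact: (@qt_generic k.+1 e).
Qed.

Lemma qpoch_reflect (c : K) N : c != 0 ->
  qpoch (c * q * q ^- N) q N = (- c) ^+ N * \prod_(l < N) (q ^+ l)^-1 * qpoch c^-1 q N.
Proof.
move=> c_neq0; rewrite /qpoch (reindex_inj rev_ord_inj) /=.
have reflect_factor (l : 'I_N) : 1 - c * q * q ^- N * q ^+ (N - l.+1) =
    (- c * (q ^+ l)^-1) * (1 - c^-1 * q ^+ l).
  have -> : q ^+ N = q ^+ (N - l.+1) * q ^+ l * q.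
    by rewrite -exprD -exprSr; congr (_ ^+ _); have := ltn_ord l; lia.
  by field; rewrite c_neq0 q_neq0 !expf_neq0.
by rewrite (eq_bigr _ (fun l _ => reflect_factor l)) !big_split /= prodr_const card_ord.
Qed.

Lemma qpoch_ratio_reflect (c : K) N : c != 0 ->
  qpoch (t * c * q * q ^- N) q N / qpoch (c * q * q ^- N) q N =
  t ^+ N * (qpoch (t * c)^-1 q N / qpoch c^-1 q N).
Proof.
move=> c_neq0; rewrite !qpoch_reflect ?mulf_neq0 //.
have Q_neq0 : \prod_(l < N) (q ^+ l)^-1 != 0.
  by apply/prodf_neq0 => l _; rewrite invr_eq0 expf_neq0.
have C_neq0 : (- c) ^+ N != 0 by rewrite expf_neq0 // oppr_eq0.
rewrite -mulrN exprMn !invfM.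
move: (\prod_(l < N) (q ^+ l)^-1) ((- c) ^+ N) (qpoch c^-1 q N)^-1 Q_neq0 C_neq0.
by move=> Q C P Q_neq0 C_neq0; field; rewrite Q_neq0 C_neq0.
Qed.

Lemma qpochZ_opp_nat (b : K) N : qpochZ b q (0%:Z - N%:Z) = (qpoch (b * q ^- N) q N)^-1.
Proof.
by case: N => [|N]; [rewrite subrr /= /qpoch !big_ord0 invr1 | rewrite sub0r -NegzE].
Qed.

Lemma qpochZ_ratio_opp_nat (e : int) N :
  qpochZ (q * t ^ e) q (0%:Z - N%:Z) / qpochZ (q * t ^ (e + 1)) q (0%:Z - N%:Z) =
  t ^+ N * (qpoch (t ^ (- e - 1)) q N / qpoch (t ^ (- e)) q N).
Proof.
have te_neq0 : t ^ e != 0 by rewrite expfz_neq0.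
rewrite !qpochZ_opp_nat invrK mulrC.
rewrite (_ : q * t ^ (e + 1) * q ^- N = t * t ^ e * q * q ^- N); last first.
  by rewrite expfzDr // expr1z; ring.
rewrite (_ : q * t ^ e * q ^- N = t ^ e * q * q ^- N); last by ring.
rewrite qpoch_ratio_reflect // invr_expz; congr (_ * (qpoch _ _ _ / _)).
by rewrite invfM invr_expz mulrC -exprN1 -expfzDr.
Qed.

Definition omega_factor (m n : nat) (lam mu : nat -> nat) (i j : nat) : K :=
  qpochZ (q * t ^ (j%:Z - i%:Z + m%:Z - n%:Z - 1)) q ((lam i)%:Z - (mu j)%:Z) /
  qpochZ (q * t ^ (j%:Z - i%:Z + m%:Z - n%:Z)) q ((lam i)%:Z - (mu j)%:Z).

Lemma omega_factor_succ m n lam mu i j :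
  omega_factor m.+1 n.+1 lam mu i j = omega_factor m n lam mu i j.
Proof.
rewrite /omega_factor.
by have -> : j%:Z - i%:Z + m.+1%:Z - n.+1%:Z = j%:Z - i%:Z + m%:Z - n%:Z :> int by lia.
Qed.

Lemma omega_factor_last_col m n lam mu i : mu n = 0%N ->
  omega_factor m.+1 n.+1 lam mu i n =
  qpoch (q * t ^ (m%:Z - i%:Z - 1)) q (lam i) / qpoch (q * t ^ (m%:Z - i%:Z)) q (lam i).
Proof.
move=> mu_n; rewrite /omega_factor mu_n !subr0.
by have -> : n%:Z - i%:Z + m.+1%:Z - n.+1%:Z = m%:Z - i%:Z :> int by lia.
Qed.

Lemma omega_factor_last_row m n lam mu j : lam m = 0%N ->
  omega_factor m.+1 n.+1 lam mu m j =
  t ^+ mu j * (qpoch (t ^ (n%:Z - j%:Z)) q (mu j) / qpoch (t ^ (n%:Z - j%:Z + 1)) q (mu j)).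
Proof.
move=> lam_m; rewrite /omega_factor lam_m.
have -> : j%:Z - m%:Z + m.+1%:Z - n.+1%:Z - 1 = j%:Z - n%:Z - 1 :> int by lia.
have -> : j%:Z - m%:Z + m.+1%:Z - n.+1%:Z = (j%:Z - n%:Z - 1) + 1 :> int by lia.
rewrite qpochZ_ratio_opp_nat.
have -> : - (j%:Z - n%:Z - 1) - 1 = n%:Z - j%:Z :> int by lia.
by have -> : - (j%:Z - n%:Z - 1) = n%:Z - j%:Z + 1 :> int by lia.
Qed.

Lemma prod_omega_factor_drop_last m n lam mu : lam m = 0%N -> mu n = 0%N ->
  \prod_(i < m.+1) \prod_(j < n.+1) omega_factor m.+1 n.+1 lam mu i j =
  (\prod_(i < m) \prod_(j < n) omega_factor m n lam mu i j) *
  \prod_(i < m) (qpoch (q * t ^ (m%:Z - i%:Z - 1)) q (lam i) /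
                 qpoch (q * t ^ (m%:Z - i%:Z)) q (lam i)) *
  \prod_(j < n) (t ^+ mu j * (qpoch (t ^ (n%:Z - j%:Z)) q (mu j) /
                              qpoch (t ^ (n%:Z - j%:Z + 1)) q (mu j))).
Proof.
move=> lam_m mu_n.
have corner : omega_factor m.+1 n.+1 lam mu m n = 1.
  by rewrite /omega_factor lam_m mu_n subrr /= /qpoch !big_ord0 divr1.
rewrite big_ord_recr /= big_ord_recr /= corner mulr1 -big_split /=; congr (_ * _).
  apply: eq_bigr => i _; rewrite big_ord_recr /= omega_factor_last_col //.
  by congr (_ * _); apply: eq_bigr => j _; rewrite omega_factor_succ.
by apply: eq_bigr => j _; rewrite omega_factor_last_row.
Qed.

Lemma qtpoch_omega_last_col m (lam : seq nat) : size lam = m ->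
  qtpoch (q * t ^ (m.+1%:Z - 1)) q t lam *
  \prod_(i < m) (qpoch (q * t ^ (m%:Z - i%:Z - 1)) q (part lam i) /
                 qpoch (q * t ^ (m%:Z - i%:Z)) q (part lam i)) =
  qtpoch (q * t ^ (m%:Z - 1)) q t lam.
Proof.
move=> size_lam; rewrite /qtpoch size_lam -big_split /=; apply: eq_bigr => i _.
rewrite !exprnN -!mulrA -!expfzDr //.
have -> : m.+1%:Z - 1 + - i%:Z = m%:Z - i%:Z :> int by lia.
have -> : m%:Z - 1 + - i%:Z = m%:Z - i%:Z - 1 :> int by lia.
by rewrite mulrC divfK // qpoch_neq0.
Qed.

Lemma prod_omega_last_row n (mu : seq nat) : size mu = n ->
  \prod_(j < n) (t ^+ part mu j *
    (qpoch (t ^ (n%:Z - j%:Z)) q (part mu j) / qpoch (t ^ (n%:Z - j%:Z + 1)) q (part mu j))) =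
  t ^+ sumn mu * (qtpoch (t ^+ n) q t mu / qtpoch (t ^+ n.+1) q t mu).
Proof.
move=> size_mu; rewrite big_split /= prodrXr sumn_part size_mu prodf_div /qtpoch size_mu.
congr (_ * (_ / _)); apply: eq_bigr => j _; rewrite exprnP exprnN -expfzDr //.
by have -> : n.+1%:Z - j%:Z = n%:Z - j%:Z + 1 :> int by lia.
Qed.

End QPochhammer.

Section MacdonaldP.
Variables (K : numFieldType) (q t : K).

Lemma macP_rev_long xr lam : (0 < part lam (size xr))%N -> macP_rev q t xr lam = 0.
Proof.
elim: xr lam => [|x xr IHxr] lam long_lam /=.
  by case: lam long_lam => [|k lam] //=; rewrite /part /= lt0n => /negbTE ->.
rewrite big1 // => f strip; rewrite IHxr ?mulr0 //.
have lt_lam := part_gt0_size long_lam.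
by case/andP: (hstrip_le strip (ltnW lt_lam)) => /(leq_trans long_lam).
Qed.

Lemma macP_long xs lam : (0 < part lam (size xs))%N -> macP q t xs lam = 0.
Proof. by rewrite -size_rev; exact: macP_rev_long. Qed.

Lemma macP_rev_scale c xr lam :
  macP_rev q t [seq c * x | x <- xr] lam = c ^+ sumn lam * macP_rev q t xr lam.
Proof.
elim: xr lam => [|x xr IHxr] lam /=.
  case: ifP => [all0|]; last by rewrite mulr0.
  rewrite (_ : sumn lam = 0%N) ?expr0 ?mulr1 //.
  by elim: lam all0 => //= k lam IH /andP[/eqP-> /IH].
rewrite big_distrr /=; apply: eq_bigr => f strip.
rewrite IHxr exprMn -[in c ^+ sumn lam](subnK (sumn_hstrip_le (size_fseq f) strip)) exprD.
ring.
Qed.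

Lemma macP_scale c xs lam :
  macP q t [seq c * x | x <- xs] lam = c ^+ sumn lam * macP q t xs lam.
Proof. by rewrite /macP -map_rev macP_rev_scale. Qed.

Lemma psi_diag lam : psi q t lam lam = 1.
Proof. by rewrite /psi big1 // => i _; rewrite big_pred0 // => j; rewrite ltnn. Qed.

Lemma macP_zero_var xs lam : sorted geq lam -> macP q t (rcons xs 0) lam = macP q t xs lam.
Proof.
move=> lam_sorted; rewrite /macP rev_rcons /=.
pose f0 : {ffun 'I_(size lam) -> 'I_(head 0%N lam).+1} :=
  [ffun i : 'I_(size lam) => inord (part lam i)].
have f0_lam : fseq f0 = lam.
  apply: (@eq_from_nth _ 0%N); rewrite ?size_fseq // => i lti.
  rewrite -/(part _ i) (part_fseq f0 (Ordinal lti)) ffunE inordK // ltnS -nth0.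
  exact: part_leq.
rewrite (bigD1 f0) /=; last by rewrite f0_lam hstrip_refl.
rewrite f0_lam psi_diag subnn expr0 !mul1r big1 ?addr0 // => f /andP[strip f_neq].
have : (sumn (fseq f) < sumn lam)%N.
  rewrite ltn_neqAle sumn_hstrip_le ?size_fseq // andbT; apply: contra f_neq => /eqP sum_eq.
  by apply/eqP/fseq_inj; rewrite f0_lam (hstrip_sumn_eq _ strip sum_eq) // size_fseq.
by rewrite -subn_gt0 => /prednK <-; rewrite exprS !mul0r mulr0 mul0r.
Qed.

End MacdonaldP.

Lemma bfun_rcons0 (K : numFieldType) (q t : K) s i j :
  bfun q t (rcons s 0%N) i j = bfun q t s i j.
Proof. by rewrite /bfun /arm /leg part_rcons0 pconj_rcons0. Qed.

Lemma psi_rcons0 (K : numFieldType) (q t : K) lam s :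
  psi q t (rcons lam 0%N) (rcons s 0%N) = psi q t lam s.
Proof.
rewrite /psi size_rcons big_ord_recr /= part_rcons0 part_size big_ord0 mulr1.
apply: eq_bigr => i _ /=; rewrite !part_rcons0.
by apply: eq_big => [j|j _]; rewrite ?part_rcons0 ?pconj_rcons0 ?bfun_rcons0.
Qed.

Lemma hstrip_rcons0 lam s : size s = size lam ->
  hstrip (rcons lam 0%N) (rcons s 0%N) = hstrip lam s.
Proof.
move=> size_s.
rewrite /hstrip size_rcons -[(size lam).+1]addn1 iotaD all_cat add0n [iota _ 1]/= all_seq1.
rewrite !part_rcons0.
have -> : part s (size lam) = 0%N by rewrite -size_s part_size.
have -> : part lam (size lam).+1 = 0%N by rewrite /part nth_default // ltnW.
by rewrite part_size leqnn !andbT; apply: eq_all => i; rewrite !part_rcons0.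
Qed.

Definition ffun_rcons0 k N (f : {ffun 'I_k -> 'I_N.+1}) : {ffun 'I_k.+1 -> 'I_N.+1} :=
  [ffun i : 'I_k.+1 => if unlift ord_max i is Some j then f j else ord0].
Definition ffun_behead_last k N (f : {ffun 'I_k.+1 -> 'I_N.+1}) : {ffun 'I_k -> 'I_N.+1} :=
  [ffun j : 'I_k => f (lift ord_max j)].

Lemma fseq_ffun_rcons0 k N (f : {ffun 'I_k -> 'I_N.+1}) :
  fseq (ffun_rcons0 f) = rcons (fseq f) 0%N.
Proof.
apply: (@eq_from_nth _ 0%N); rewrite ?size_rcons !size_fseq // => i lti.
rewrite -/(part _ i) (part_fseq _ (Ordinal lti)) ffunE -/(part _ i) part_rcons0.
case: unliftP => [j /(congr1 val) /= ->|/(congr1 val) /= ->]; last first.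
  by rewrite /part nth_default ?size_fseq.
by rewrite /bump leqNgt ltn_ord add0n part_fseq.
Qed.

Lemma ffun_rcons0K k N : cancel (@ffun_rcons0 k N) (@ffun_behead_last k N).
Proof. by move=> f; apply/ffunP => j; rewrite !ffunE liftK. Qed.

Lemma ffun_behead_lastK k N (f : {ffun 'I_k.+1 -> 'I_N.+1}) :
  f ord_max = ord0 -> ffun_rcons0 (ffun_behead_last f) = f.
Proof.
move=> f_max; apply/ffunP => i; rewrite !ffunE.
by case: unliftP => [j ->|->]; rewrite ?ffunE.
Qed.

Lemma sum_ffun_last0 (K : numFieldType) k N (P : pred (seq nat)) (F : seq nat -> K) :
  (forall s, P s -> (0 < part s k)%N -> F s = 0) ->
  \sum_(f : {ffun 'I_k.+1 -> 'I_N.+1} | P (fseq f)) F (fseq f) =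
  \sum_(f : {ffun 'I_k -> 'I_N.+1} | P (rcons (fseq f) 0%N)) F (rcons (fseq f) 0%N).
Proof.
move=> F_long; rewrite (bigID (fun f : {ffun 'I_k.+1 -> 'I_N.+1} => f ord_max == ord0)) /=.
rewrite [X in _ + X]big1 ?addr0 => [|f /andP[Pf f_max]]; last first.
  apply: F_long; rewrite // (part_fseq f ord_max) lt0n.
  by apply: contra f_max => /eqP f_max0; apply/eqP/val_inj.
rewrite (reindex_onto (@ffun_rcons0 k N) (@ffun_behead_last k N)) /=; last first.
  by move=> f /andP[_ /eqP]; exact: ffun_behead_lastK.
apply: eq_big => [f|f _]; last by rewrite fseq_ffun_rcons0.
by rewrite fseq_ffun_rcons0 ffunE unlift_none eqxx ffun_rcons0K eqxx !andbT.
Qed.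

Lemma macP_rev_rcons0 (K : numFieldType) (q t : K) xr lam :
  macP_rev q t xr (rcons lam 0%N) = macP_rev q t xr lam.
Proof.
elim: xr lam => [|x xr IHxr] lam /=; first by rewrite all_rcons.
rewrite (_ : head 0%N (rcons lam 0%N) = head 0%N lam); last by case: lam.
rewrite size_rcons (@sum_ffun_last0 _ _ _ (hstrip (rcons lam 0%N)) (fun s =>
  psi q t (rcons lam 0%N) s * x ^+ (sumn (rcons lam 0%N) - sumn s) * macP_rev q t xr s))
  => [|s strip]; last first.
  have : size lam \in iota 0 (size (rcons lam 0%N)) by rewrite mem_iota size_rcons ltnSn.
  by move/(allP strip)/andP => [_]; rewrite part_rcons0 part_size leqNgt => /negbTE->.
apply: eq_big => [f|f _]; first by rewrite hstrip_rcons0 // size_fseq.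
by rewrite psi_rcons0 !sumn_rcons !addn0 IHxr.
Qed.

Lemma macP_rcons0 (K : numFieldType) (q t : K) xs lam :
  macP q t xs (rcons lam 0%N) = macP q t xs lam.
Proof. exact: macP_rev_rcons0. Qed.

Section TrailingZeros.
Variables (K : numFieldType) (q t : K).
Hypotheses (q_neq0 : q != 0) (t_neq0 : t != 0).
Hypothesis qt_generic : forall i j : int, (i != 0) || (j != 0) -> q ^ i * t ^ j != 1.
Variables (m n : nat) (lam mu : seq nat).
Hypothesis le_mn : (m <= n)%N.
Hypotheses (lam_sorted : sorted geq lam) (mu_sorted : sorted geq mu).
Hypotheses (size_lam : size lam = m) (size_mu : size mu = n).
Hypothesis lam_mu_interlace : interlace m n lam mu.

Lemma V1_rcons0 u :
  V1 u q t m.+1 n.+1 (rcons lam 0%N) (rcons mu 0%N) = V1 u q t m n lam mu.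
Proof.
have part_lam : part (rcons lam 0%N) = part lam by apply: funext => i; exact: part_rcons0.
have part_mu : part (rcons mu 0%N) = part mu by apply: funext => i; exact: part_rcons0.
rewrite /V1; under eq_fun do rewrite VzE part_lam part_mu.
under [in RHS]eq_fun do rewrite VzE.
apply: lim_sum_Fterm_drop_last => //.
- by rewrite -size_lam part_size.
- by rewrite -size_mu part_size.
- exact: part_noninc.
- exact: part_noninc.
- exact: interlace_part.
Qed.

Lemma Vqt_rcons0 typ :
  Vqt typ q t m.+1 n.+1 (rcons lam 0%N) (rcons mu 0%N) = Vqt typ q t m n lam mu.
Proof. by case: typ => /=; rewrite V1_rcons0 // subSS sumn_rcons addn0. Qed.

Lemma Omega_rcons0 typ :
  Omega typ q t m.+1 n.+1 (rcons lam 0%N) (rcons mu 0%N) =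
  Omega typ q t m n lam mu *
  (t ^+ sumn mu * (qtpoch (t ^+ n) q t mu / qtpoch (t ^+ n.+1) q t mu)).
Proof.
have part_lam : part (rcons lam 0%N) = part lam by apply: funext => i; exact: part_rcons0.
have part_mu : part (rcons mu 0%N) = part mu by apply: funext => i; exact: part_rcons0.
have lam_m : part lam m = 0%N by rewrite -size_lam part_size.
have mu_n : part mu n = 0%N by rewrite -size_mu part_size.
have := prod_omega_factor_drop_last q_neq0 t_neq0 lam_m mu_n.
rewrite /Omega /omega_factor Vqt_rcons0 qtpoch_rcons0 part_lam part_mu => ->.
rewrite (prod_omega_last_row q_neq0 t_neq0 size_mu).
by rewrite -(qtpoch_omega_last_col q_neq0 t_neq0 qt_generic size_lam); ring.
Qed.

Lemma term_rcons0 typ (a b x y : seq K) :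
  term typ q t m.+1 n.+1 a b (rcons x 0) (rcons y 0) (rcons lam 0%N) (rcons mu 0%N) =
  term typ q t m n (t ^+ n :: a) (t ^+ n.+1 :: b) x [seq t * yj | yj <- y] lam mu.
Proof.
rewrite /term !nfun_rcons0 !cprime_rcons0 !macP_zero_var ?sorted_rcons0 //.
rewrite !macP_rcons0 macP_scale Omega_rcons0 !big_cons.
rewrite (eq_bigr _ (fun c _ => qtpoch_rcons0 c q t mu)).
rewrite [X in _ / X](eq_bigr _ (fun c _ => qtpoch_rcons0 c q t mu)).
by rewrite !invfM; ring.
Qed.

End TrailingZeros.

Section Stability.
Variables (K : numFieldType) (q t : K).
Hypotheses (q_neq0 : q != 0) (t_neq0 : t != 0).
Hypothesis qt_generic : forall i j : int, (i != 0) || (j != 0) -> q ^ i * t ^ j != 1.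

Lemma term_long_lam typ m n a b (x y : seq K) lam mu :
  sorted geq lam -> (0 < part lam (size x))%N ->
  term typ q t m n a b (rcons x 0) y lam mu = 0.
Proof. by move=> ? ?; rewrite /term macP_zero_var // macP_long // !(mulr0, mul0r). Qed.

Lemma term_long_mu typ m n a b (x y : seq K) lam mu :
  sorted geq mu -> (0 < part mu (size y))%N ->
  term typ q t m n a b x (rcons y 0) lam mu = 0.
Proof.
move=> ? ?; rewrite /term [macP _ _ (rcons y 0) _]macP_zero_var //.
by rewrite [macP _ _ y _]macP_long // !(mulr0, mul0r).
Qed.

Lemma Psum_rcons0 typ m n (a b x y : seq K) N :
  (m <= n)%N -> size x = m -> size y = n ->
  Psum typ q t m.+1 n.+1 a b (rcons x 0) (rcons y 0) N =
  Psum typ q t m n (t ^+ n :: a) (t ^+ n.+1 :: b) x [seq t * yj | yj <- y] N.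
Proof.
move=> le_mn size_x size_y; rewrite /Psum.
rewrite (@sum_ffun_last0 _ m N (sorted geq) (fun s =>
  \sum_(g : {ffun 'I_n.+1 -> 'I_N.+1} | [&& sorted geq (fseq g),
      interlace m.+1 n.+1 s (fseq g) & (sumn s + sumn (fseq g) <= N)%N])
    term typ q t m.+1 n.+1 a b (rcons x 0) (rcons y 0) s (fseq g))) => [|s ? ?]; last first.
  by apply: big1 => g _; rewrite term_long_lam ?size_x.
apply: eq_big => [f|f]; rewrite sorted_rcons0 // => f_sorted.
rewrite (@sum_ffun_last0 _ n N (fun u => [&& sorted geq u,
      interlace m.+1 n.+1 (rcons (fseq f) 0%N) u &
      (sumn (rcons (fseq f) 0%N) + sumn u <= N)%N])
  (term typ q t m.+1 n.+1 a b (rcons x 0) (rcons y 0) (rcons (fseq f) 0%N)))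
  => [|s /and3P[? _ _] ?]; last by rewrite term_long_mu ?size_y.
apply: eq_big => [g|g]; rewrite sorted_rcons0 interlace_rcons0 ?size_fseq //.
  by rewrite !sumn_rcons !addn0.
by case/and3P => g_sorted inter _; rewrite term_rcons0 ?size_fseq.
Qed.

End Stability.

Lemma qpoch_inf0 (K : numFieldType) (q : K) : qpoch_inf 0 q = 1.
Proof.
rewrite /qpoch_inf (_ : qpoch 0 q = fun=> 1); first by apply: norm_cvg_lim; exact: cvg_cst.
by apply: funext => N; rewrite /qpoch big1 // => k _; rewrite mul0r subr0.
Qed.

Lemma prefactor_rcons0 (K : numFieldType) (q t : K) m n (x : seq K) : size x = m ->
  prefactor q t m.+1 n.+1 (rcons x 0) = prefactor q t m n x.
Proof.
move=> size_x; rewrite /prefactor big_ord_recr /= nth_rcons size_x ltnn eqxx.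
rewrite mul0r qpoch_inf0 divr1 mulr1; apply: eq_bigr => i _.
rewrite nth_rcons size_x ltn_ord.
by have -> : m.+1%:Z - n.+1%:Z - 1 = m%:Z - n%:Z - 1 :> int by lia.
Qed.

Theorem lemma5p5 (K : numFieldType) (typ : mtype) (m n r : nat) (q t : K)
  (a b x y : seq K) :
  (1 <= m)%N -> (m <= n)%N ->
  size x = m.-1 -> size y = n.-1 -> size a = r.+1 -> size b = r ->
  q != 0 -> t != 0 -> `|q| < 1 ->
  (forall i j : int, (i != 0) || (j != 0) -> q ^ i * t ^ j != 1) ->
  cvg (Psum typ q t m n a b (rcons x 0) (rcons y 0) @ \oo) ->
  Phi typ q t m n a b (rcons x 0) (rcons y 0) =
  Phi typ q t m.-1 n.-1 (t ^+ n.-1 :: a) (t ^+ n :: b) x [seq t * yj | yj <- y].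
Proof.
(* The partial sums agree for every N. *)
move=> le1m le_mn size_x size_y _ _ q_neq0 t_neq0 _ qt_generic _.
case: m le1m le_mn size_x => [//|m] _ le_mn size_x.
case: n le_mn size_y => [//|n] le_mn size_y /=.
have Psum_eq : Psum typ q t m.+1 n.+1 a b (rcons x 0) (rcons y 0) =
               Psum typ q t m n (t ^+ n :: a) (t ^+ n.+1 :: b) x [seq t * yj | yj <- y].
  by apply: funext => N; exact: Psum_rcons0.
by rewrite /Phi prefactor_rcons0 // Psum_eq.
Qed.
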